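(* For every contractor network, the matrix $\mathbf I-\mathbf A\mathbf W$ is invertible and the Neumann series $\sum_{t=0}^\infty(\mathbf A\mathbf W)^t$ converges to $(\mathbf I-\mathbf A\mathbf W)^{-1}$.
   Context: A contractor network is a finite directed graph $G=(\mathcal V,\mathcal E)$ with $n=|\mathcal V|$ nodes, without multiple edges (self-loops and directed cycles are allowed), in which every node has at least one incident edge. For $i\in\mathcal V$ let $\delta_{\mathrm{in}}(i)=\{j:(j,i)\in\mathcal E\}$ and $\delta_{\mathrm{out}}(i)=\{k:(i,k)\in\mathcal E\}$. A node $i$ is a pure principal if $\delta_{\mathrm{in}}(i)=\emptyset$, a pure obligee if $\delta_{\mathrm{out}}(i)=\emptyset$, and an intermediary otherwise. Each edge $(j,i)\in\mathcal E$ carries a weight $w_{ij}>0$; set $w_{ij}=0$ if $(j,i)\notin\mathcal E$; for every node $i$ with $\delta_{\mathrm{in}}(i)\neq\emptyset$ we have $\sum_{j\in\delta_{\mathrm{in}}(i)}w_{ij}=1$. Let $\mathbf W=(w_{ij})_{i,j\in\mathcal V}$. Each node has a propagation parameter $\alpha_i$, with $\alpha_i=0$ for pure principals, $\alpha_i=1$ for pure obligees, and $\alpha_i\in(0,1)$ for intermediaries; $\mathbf A=\mathrm{diag}(\alpha_i)_{i\in\mathcal V}$. *)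

From HB Require Import structures.
From mathcomp Require Import all_boot all_order all_algebra.
From mathcomp Require Import all_classical all_reals all_analysis.
Set Implicit Arguments. Unset Strict Implicit. Unset Printing Implicit Defensive.
Import Order.TTheory GRing.Theory Num.Theory.
Local Open Scope ring_scope.

(* A contractor network on the node set 'I_n:
   E j i  means  (j, i) is a directed edge  (edge relation; no multi-edges by
   construction, self-loops and cycles allowed).
   w : 'M[R]_n with  w i j = w_{ij}  the weight of edge (j,i).
   alpha : propagation parameters. *)

Definition in_nbrs n (E : rel 'I_n) (i : 'I_n) : {set 'I_n} := [set j | E j i].
Definition out_nbrs n (E : rel 'I_n) (i : 'I_n) : {set 'I_n} := [set k | E i k].

Definition pure_principal n (E : rel 'I_n) i := in_nbrs E i == finset.set0.
Definition pure_obligee n (E : rel 'I_n) i := out_nbrs E i == finset.set0.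
Definition intermediary n (E : rel 'I_n) i :=
  ~~ pure_principal E i && ~~ pure_obligee E i.

Definition contractor_network (R : realType) n (E : rel 'I_n)
    (w : 'M[R]_n) (alpha : 'I_n -> R) : Prop :=
  (forall i : 'I_n, exists k : 'I_n, E i k || E k i) /\
  (forall i j : 'I_n, E j i -> 0 < w i j) /\
  (forall i j : 'I_n, ~~ E j i -> w i j = 0) /\
  (forall i : 'I_n, in_nbrs E i != finset.set0 ->
     \sum_(j in in_nbrs E i) w i j = 1) /\
  (forall i : 'I_n, pure_principal E i -> alpha i = 0) /\
  (forall i : 'I_n, pure_obligee E i -> alpha i = 1) /\
  (forall i : 'I_n, intermediary E i -> 0 < alpha i < 1).

Definition Amx (R : realType) n (alpha : 'I_n -> R) : 'M[R]_n :=
  diag_mx (\row_i alpha i).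

From HB Require Import structures.
From mathcomp Require Import all_boot all_order all_algebra.
From mathcomp Require Import all_classical all_reals all_analysis.
Import Order.TTheory GRing.Theory Num.Theory.
Import numFieldNormedType.Exports.
Set Implicit Arguments. Unset Strict Implicit. Unset Printing Implicit Defensive.
Local Open Scope classical_set_scope.
Local Open Scope ring_scope.

(* M := A W is entrywise nonnegative with row sums at most 1 (alpha_i <= 1 and
   the incoming weights of i sum to 1 or 0), and the row sums of M^2 are
   strictly below 1: a node that is not a pure obligee has alpha_i < 1, and a
   pure obligee i has an in-neighbour k that is not a pure obligee, so the mass
   of row i of M passing through k loses a factor alpha_k < 1 at the second
   step.  Row sums of M^N therefore decay geometrically, M^N tends to 0, and
   then I - M is invertible with inverse the Neumann series, because
   (I - M) (I + M + ... + M^(N-1)) = I - M^N. *)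

Section MatrixNorm.
Variable R : realFieldType.

Lemma mxnorm_entry_le m k (A : 'M[R]_(m, k)) i j : `|A i j| <= `|A|.
Proof.
by rewrite [leRHS]/Num.Def.normr /= mx_normrE; apply/bigmax_geP; right; exists (i, j).
Qed.

Lemma mxnorm_le_entries m k (A : 'M[R]_(m, k)) e :
  0 <= e -> (forall i j, `|A i j| <= e) -> `|A| <= e.
Proof.
move=> e_ge0 Ae; rewrite [leLHS]/Num.Def.normr /= mx_normrE.
by apply: bigmax_le => // -[i j] _; exact: Ae.
Qed.

Lemma mxnorm_mulmx_le m k p (A : 'M[R]_(m, k)) (B : 'M[R]_(k, p)) :
  `|A *m B| <= k%:R * (`|A| * `|B|).
Proof.
apply: mxnorm_le_entries => [|i j]; first by rewrite !mulr_ge0.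
have -> : k%:R * (`|A| * `|B|) = \sum_(l < k) `|A| * `|B|.
  by rewrite sumr_const card_ord mulr_natl.
rewrite mxE (le_trans (ler_norm_sum _ _ _)) //.
by apply: ler_sum => l _; rewrite normrM ler_pM ?mxnorm_entry_le.
Qed.

Lemma cvg_mulmxl0 {T : Type} (F : set_system T) {FF : Filter F} m k p
    (A : 'M[R]_(m, k)) (f : T -> 'M[R]_(k, p)) :
  f @ F --> (0 : 'M[R]_(k, p)) -> (fun x => A *m f x) @ F --> (0 : 'M[R]_(m, p)).
Proof.
move=> f0; apply: norm_cvg0.
apply: (@squeeze_cvgr _ _ _ _ (fun=> 0) (fun x => k%:R * (`|A| * `|f x|))).
- by near=> x; rewrite normr_ge0 mxnorm_mulmx_le.
- exact: cvg_cst.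
- rewrite -(mulr0 (k%:R * `|A|)); under eq_fun do rewrite mulrA.
  apply: cvgM; first exact: cvg_cst.
  by rewrite -(@normr0 _ 'M[R]_(k, p)); apply: cvg_norm.
Unshelve. all: end_near.
Qed.

End MatrixNorm.

Section NeumannSeries.
Variables (R : realFieldType) (n : nat) (M : 'M[R]_n).
Hypothesis expM_cvg0 : M ^+ N @[N --> \oo] --> (0 : 'M[R]_n).

Lemma unitmx_1B : (1%:M - M) \in unitmx.
Proof.
rewrite unitmxE unitfE; apply/negP => /det0P[v v_neq0].
rewrite mulmxBr mulmx1 => /eqP; rewrite subr_eq0 => /eqP vM.
have vMN N : v *m M ^+ N = v.
  elim: N => [|N IH]; first by rewrite expr0 mulmx1.
  by rewrite exprSr -mulmxE mulmxA IH -vM.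
have : (fun N => v *m M ^+ N) @ \oo --> (0 : 'rV[R]_n) by exact: cvg_mulmxl0.
under eq_fun do rewrite vMN; move=> v_cvg0.
by move/eqP: v_neq0; apply; exact: (cvg_unique _ (cvg_cst v) v_cvg0).
Qed.

Lemma mulmx_1B_sum N :
  (1%:M - M) *m (\sum_(0 <= t < N) M ^+ t) = 1%:M - M ^+ N.
Proof.
rewrite mulmxE; elim: N => [|N IH].
  by rewrite big_geq // mulr0 expr0 subrr.
by rewrite big_nat_recr //= mulrDr IH mulrBl mul1r -exprS addrA subrK.
Qed.

Lemma cvg_neumann_series :
  series (fun t => M ^+ t) @ \oo --> invmx (1%:M - M).
Proof.
set X := invmx (1%:M - M).
have -> : series (fun t => M ^+ t) = fun N => X - X *m M ^+ N.
  apply/funext => N; rewrite /series /= -[LHS]mul1mx -(mulVmx unitmx_1B).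
  by rewrite -mulmxA mulmx_1B_sum mulmxBr mulmx1.
rewrite -[X in _ --> X]subr0; apply: cvgB; first exact: cvg_cst.
exact: cvg_mulmxl0.
Qed.

End NeumannSeries.

Definition rowsum (R : pzSemiRingType) m k (A : 'M[R]_(m, k)) (i : 'I_m) : R :=
  \sum_j A i j.

Lemma rowsum_mulmx (R : pzSemiRingType) m k p (A : 'M[R]_(m, k))
    (B : 'M[R]_(k, p)) i :
  rowsum (A *m B) i = \sum_l A i l * rowsum B l.
Proof.
rewrite /rowsum (eq_bigr (fun j => \sum_l A i l * B l j)) => [|j _]; last first.
  by rewrite mxE.
by rewrite exchange_big; apply: eq_bigr => l _; rewrite mulr_sumr.
Qed.

Section NonnegativeMatrices.
Variable R : numDomainType.

Definition nonnegmx m k (A : 'M[R]_(m, k)) := forall i j, 0 <= A i j.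

Lemma nonnegmx_mul m k p (A : 'M[R]_(m, k)) (B : 'M[R]_(k, p)) :
  nonnegmx A -> nonnegmx B -> nonnegmx (A *m B).
Proof.
by move=> A_ge0 B_ge0 i j; rewrite mxE sumr_ge0 // => l _; rewrite mulr_ge0.
Qed.

Lemma nonnegmx_exp n (A : 'M[R]_n) N : nonnegmx A -> nonnegmx (A ^+ N).
Proof.
move=> A_ge0; elim: N => [|N IH] i j; first by rewrite expr0 mxE ler0n.
by rewrite exprS -mulmxE; apply: nonnegmx_mul.
Qed.

Lemma rowsum_ge0 m k (A : 'M[R]_(m, k)) i : nonnegmx A -> 0 <= rowsum A i.
Proof. by move=> A_ge0; rewrite sumr_ge0. Qed.

Lemma entry_le_rowsum m k (A : 'M[R]_(m, k)) i j :
  nonnegmx A -> A i j <= rowsum A i.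
Proof.
by move=> A_ge0; rewrite /rowsum (bigD1 j) //= lerDl sumr_ge0.
Qed.

Lemma rowsum_mulmx_le m k p (A : 'M[R]_(m, k)) (B : 'M[R]_(k, p)) b i :
  nonnegmx A -> (forall l, rowsum B l <= b) -> rowsum (A *m B) i <= rowsum A i * b.
Proof.
move=> A_ge0 Bb; rewrite rowsum_mulmx [rowsum A i]/rowsum mulr_suml.
by apply: ler_sum => l _; rewrite ler_wpM2l.
Qed.

End NonnegativeMatrices.

Lemma cvgn_divn p : (0 < p)%N -> (N %/ p)%N @[N --> \oo] --> \oo.
Proof.
move=> p_gt0; apply/cvgnyPge => k; near=> N; rewrite leq_divRL //.
by near: N; apply: nbhs_infty_ge.
Unshelve. all: end_near.
Qed.

Section SubstochasticPowers.
Variables (R : archiRealFieldType) (n p : nat) (M : 'M[R]_n).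
Hypotheses (M_ge0 : nonnegmx M) (rowsum_le1 : forall i, rowsum M i <= 1).
Hypotheses (p_gt0 : (0 < p)%N) (rowsum_exp_lt1 : forall i, rowsum (M ^+ p) i < 1).

Let c := \big[Num.max/0]_i rowsum (M ^+ p) i.

Let c_ge0 : 0 <= c. Proof. by apply/bigmax_geP; left. Qed.

Let rowsum_exp_le_c i : rowsum (M ^+ p) i <= c.
Proof. by apply/bigmax_geP; right; exists i. Qed.

Let c_lt1 : c < 1.
Proof. by apply/bigmax_ltP; split => // i _; exact: rowsum_exp_lt1. Qed.

Lemma rowsum_exp_le1 N i : rowsum (M ^+ N) i <= 1.
Proof.
elim: N i => [|N IH] i.
  rewrite /rowsum expr0 (bigD1 i) //= big1 ?addr0 ?mxE ?eqxx // => j.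
  by rewrite mxE eq_sym => /negbTE ->.
rewrite exprS -mulmxE (le_trans (rowsum_mulmx_le _ M_ge0 IH)) //.
by rewrite mulr1 rowsum_le1.
Qed.

Lemma rowsum_exp_le N i : rowsum (M ^+ N) i <= c ^+ (N %/ p).
Proof.
have Mp_ge0 := nonnegmx_exp p M_ge0.
have rowsum_expM q j : rowsum ((M ^+ p) ^+ q) j <= c ^+ q.
  elim: q j => [|q IH] j; first by rewrite -exprM muln0 rowsum_exp_le1.
  rewrite exprS -mulmxE (le_trans (rowsum_mulmx_le _ Mp_ge0 IH)) //.
  by rewrite exprS ler_wpM2r ?exprn_ge0.
rewrite {1}(divn_eq N p) exprD mulnC exprM -mulmxE.
rewrite (le_trans (rowsum_mulmx_le _ (nonnegmx_exp _ Mp_ge0) (rowsum_exp_le1 _))) //.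
by rewrite mulr1 rowsum_expM.
Qed.

Lemma cvg_expmx : M ^+ N @[N --> \oo] --> (0 : 'M[R]_n).
Proof.
apply: norm_cvg0.
apply: (@squeeze_cvgr _ _ _ _ (fun=> 0) (fun N => c ^+ (N %/ p))).
- near=> N; rewrite normr_ge0 /=; apply: mxnorm_le_entries => [|i j].
    by rewrite exprn_ge0.
  rewrite ger0_norm ?(nonnegmx_exp _ M_ge0) //.
  exact: le_trans (entry_le_rowsum _ _ (nonnegmx_exp _ M_ge0)) (rowsum_exp_le _ _).
- exact: cvg_cst.
- apply: (cvg_comp _ _ (cvgn_divn p_gt0)); apply: cvg_expr.
  by rewrite ger0_norm.
Unshelve. all: end_near.
Qed.

End SubstochasticPowers.

Section ContractorNetwork.
Variables (R : realType) (n : nat) (E : rel 'I_n) (w : 'M[R]_n) (alpha : 'I_n -> R).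
Hypothesis net : contractor_network E w alpha.

Lemma alpha_ge0 i : 0 <= alpha i.
Proof.
have [_ [_ [_ [_ [principal0 [obligee1 intermediary01]]]]]] := net.
have [/principal0 -> //|not_principal] := boolP (pure_principal E i).
have [/obligee1 -> //|not_obligee] := boolP (pure_obligee E i).
have intermediary_i : intermediary E i by apply/andP.
by have /andP[/ltW] := intermediary01 i intermediary_i.
Qed.

Lemma alpha_lt1 i : ~~ pure_obligee E i -> alpha i < 1.
Proof.
have [_ [_ [_ [_ [principal0 [_ intermediary01]]]]]] := net.
move=> not_obligee; have [/principal0 -> //|not_principal] := boolP (pure_principal E i).
have intermediary_i : intermediary E i by apply/andP.
by have /andP[] := intermediary01 i intermediary_i.
Qed.

Lemma alpha_le1 i : alpha i <= 1.
Proof.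
have [_ [_ [_ [_ [_ [obligee1 _]]]]]] := net.
have [/obligee1 -> //|/alpha_lt1/ltW //] := boolP (pure_obligee E i).
Qed.

Lemma w_ge0 : nonnegmx w.
Proof.
have [_ [w_pos [w_off _]]] := net.
by move=> i j; case: (boolP (E j i)) => [/w_pos/ltW|/w_off ->].
Qed.

Lemma rowsum_w i : rowsum w i = \sum_(j in in_nbrs E i) w i j.
Proof.
have [_ [_ [w_off _]]] := net.
rewrite /rowsum (bigID (mem (in_nbrs E i))) /= [X in _ + X]big1 ?addr0 // => j.
by rewrite inE => /w_off.
Qed.

Lemma rowsum_w_le1 i : rowsum w i <= 1.
Proof.
have [_ [_ [_ [w_sum1 _]]]] := net.
rewrite rowsum_w; have [/eqP in0|/w_sum1 -> //] := boolP (in_nbrs E i == finset.set0).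
by rewrite in0 big_set0 ler01.
Qed.

Local Notation M := (Amx alpha *m w).

Lemma Aw_ge0 : nonnegmx M.
Proof.
apply: nonnegmx_mul w_ge0 => i j.
by rewrite !mxE mulrn_wge0 ?alpha_ge0.
Qed.

Lemma rowsum_Aw i : rowsum M i = alpha i * rowsum w i.
Proof.
rewrite /Amx /rowsum mulr_sumr; apply: eq_bigr => j _.
by rewrite mul_diag_mx !mxE.
Qed.

Lemma rowsum_Aw_le1 i : rowsum M i <= 1.
Proof.
by rewrite rowsum_Aw mulr_ile1 ?alpha_ge0 ?alpha_le1 ?rowsum_w_le1 ?(rowsum_ge0 _ w_ge0).
Qed.

Lemma rowsum_Aw_lt1 i : ~~ pure_obligee E i -> rowsum M i < 1.
Proof.
move=> not_obligee; rewrite rowsum_Aw (le_lt_trans _ (alpha_lt1 not_obligee)) //.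
by rewrite ler_piMr ?alpha_ge0 ?rowsum_w_le1.
Qed.

Lemma obligee_in_nbr i :
  pure_obligee E i -> exists2 k, E k i & ~~ pure_obligee E k.
Proof.
have [incident _] := net; move=> obligee.
have [k /orP[Eik|Eki]] := incident i.
  by move/eqP/setP/(_ k): obligee; rewrite !inE Eik.
by exists k => //; apply/set0Pn; exists i; rewrite inE.
Qed.

Lemma rowsum_Aw2_lt1 i : rowsum (M ^+ 2) i < 1.
Proof.
rewrite expr2 -mulmxE; have [obligee|not_obligee] := boolP (pure_obligee E i); last first.
  rewrite (le_lt_trans (rowsum_mulmx_le i Aw_ge0 rowsum_Aw_le1)) //.
  by rewrite mulr1 rowsum_Aw_lt1.
have [_ [w_pos [_ [w_sum1 [_ [obligee1 _]]]]]] := net.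
have [k Eki not_obligee_k] := obligee_in_nbr obligee.
have in_k : in_nbrs E i != finset.set0 by apply/set0Pn; exists k; rewrite inE.
have M_ik_gt0 : 0 < M i k by rewrite /Amx mul_diag_mx !mxE obligee1 // mul1r w_pos.
have <- : rowsum M i = 1 by rewrite rowsum_Aw obligee1 // mul1r rowsum_w w_sum1.
rewrite rowsum_mulmx [rowsum M i]/rowsum [ltRHS](bigD1 k) //= (bigD1 k) //= ltr_leD //.
  by rewrite -[ltRHS]mulr1 ltr_pM2l // rowsum_Aw_lt1.
apply: ler_sum => l _.
by rewrite -[leRHS]mulr1 ler_wpM2l ?Aw_ge0 ?rowsum_Aw_le1.
Qed.

End ContractorNetwork.

Theorem mainTheorem3 (R : realType) (n : nat) (E : rel 'I_n)
    (w : 'M[R]_n) (alpha : 'I_n -> R) :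
  contractor_network E w alpha ->
  (1%:M - Amx alpha *m w) \in unitmx /\
  (series (fun t : nat => (Amx alpha *m w) ^+ t) @ \oo -->
     invmx (1%:M - Amx alpha *m w)).
Proof.
move=> net.
have cvg0 := cvg_expmx (Aw_ge0 net) (rowsum_Aw_le1 net) (ltn0Sn 1) (rowsum_Aw2_lt1 net).
by split; [exact: unitmx_1B cvg0 | exact: cvg_neumann_series cvg0].
Qed.
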